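(* Let $IS\in\{\Box,\blacksquare\}^2$ and let $\tau$ be a correct compositional translation from $\mathrm{SYNCSIMPLE}$ into $\mathrm{LOCKSIMPLE}_{2,IS}$ of blocking type $(P_iP_i,P_jP_j)$ with $i,j\in\{1,2\}$. Then $i\neq j$.
   Context: $\mathrm{SYNCSIMPLE}$: subprocesses $\mathcal{U} ::= \checkmark \mid 0 \mid\, !\mathcal{U} \mid\, ?\mathcal{U}$; processes are finite parallel compositions $\mathcal{U}_1\mid\cdots\mid\mathcal{U}_n$ ($\mid$ associative, commutative, $0$ a unit). Reduction: $!\mathcal{U}_1\mid ?\mathcal{U}_2\mid \mathcal{P}\to \mathcal{U}_1\mid\mathcal{U}_2\mid\mathcal{P}$. Successful: of form $\checkmark\mid\mathcal{P}$; may-convergent: reduces to a successful process; must-convergent: every reachable process is may-convergent. $\mathrm{LOCKSIMPLE}_{k,IS}$ ($IS\in\{\Box,\blacksquare\}^k$, $\Box$ empty, $\blacksquare$ full): subprocesses are words over $\{P_1,T_1,\dots,P_k,T_k\}$ followed by $0$ or $\checkmark$; states $(\mathcal{P},C)$ reduce by $(P_i\mathcal{U}\mid\mathcal{P},C)\to(\mathcal{U}\mid\mathcal{P},C[C_i:=\blacksquare])$ only if $C_i=\Box$, and $(T_i\mathcal{U}\mid\mathcal{P},C)\to(\mathcal{U}\mid\mathcal{P},C[C_i:=\Box])$ always. Success = process contains $\checkmark$; a process $\mathcal{P}$ is may/must-convergent iff the state $(\mathcal{P},IS)$ is (defined as in SYNCSIMPLE). A compositional translation $\tau$ is given by words $\tau(!),\tau(?)$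 with $\tau(0)=0$, $\tau(\checkmark)=\checkmark$, $\tau(!\mathcal{U})=\tau(!)\tau(\mathcal{U})$, $\tau(?\mathcal{U})=\tau(?)\tau(\mathcal{U})$, $\tau$ commuting with $\mid$; correct = preserves and reflects may- and must-convergence. Blocking type: for a word $S$ over $\{P_i,T_i\}$, run $S$ as a single subprocess from store $IS$. If it gets stuck at an occurrence of $P_i$ (lock $i$ full), the prefix ending with that occurrence is the blocking prefix; if that occurrence is the first symbol of $\{P_i,T_i\}$ in $S$ (prefix of form $RP_i$, $R$ without $P_i,T_i$) the blocking type of $S$ is $P_i$, otherwise the blocking prefix has form $R_1P_iR_2P_i$ with $R_2$ containing no $P_i,T_i$ and the blocking type is $P_iP_i$. $\tau$ has blocking type $(W_1,W_2)$ if $W_1$ is the blocking type of $\tau(!)$ and $W_2$ that of $\tau(?)$. *)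

From mathcomp Require Import all_boot.
From Stdlib Require Import Permutation Relation_Operators.
Set Implicit Arguments. Unset Strict Implicit. Unset Printing Implicit Defensive.

Inductive sync_sub : Type :=
| SCheck : sync_sub
| SZero  : sync_sub
| SSend  : sync_sub -> sync_sub
| SRecv  : sync_sub -> sync_sub .

(* processes: finite parallel compositions, as lists (| assoc./comm. via Permutation) *)
Definition sync_proc := seq sync_sub.

Definition sync_step (P Q : sync_proc) : Prop :=
  exists u1 u2 R, Permutation P (SSend u1 :: SRecv u2 :: R) /\ Q = u1 :: u2 :: R.

Definition sync_successful (P : sync_proc) : Prop := List.In SCheck P.

Definition sync_reach := clos_refl_trans sync_proc sync_step.

Definition sync_may (P : sync_proc) : Prop :=
  exists Q, sync_reach P Q /\ sync_successful Q.

Definition sync_must (P : sync_proc) : Prop :=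
  forall Q, sync_reach P Q -> sync_may Q.

Inductive lsym (k : nat) : Type :=
| LP : 'I_k -> lsym k
| LT : 'I_k -> lsym k.

(* a subprocess: a word over {P_i,T_i} followed by 0 (false) or ✓ (true) *)
Definition lock_sub (k : nat) : Type := (seq (lsym k) * bool)%type.
Definition lock_proc (k : nat) : Type := seq (lock_sub k).

(* store: true = full (■), false = empty (□) *)
Definition store (k : nat) : Type := 'I_k -> bool.

Definition upd (k : nat) (C : store k) (i : 'I_k) (b : bool) : store k :=
  fun j => if j == i then b else C j.

Definition lock_step (k : nat) (s1 s2 : lock_proc k * store k) : Prop :=
  let: (P, C) := s1 in
  exists (a : lsym k) (w : seq (lsym k)) (e : bool) (R : lock_proc k),
    Permutation P ((a :: w, e) :: R) /\
    match a with
    | LP i => C i = false /\ s2 = ((w, e) :: R, upd C i true)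
    | LT i => s2 = ((w, e) :: R, upd C i false)
    end.

Definition lock_successful (k : nat) (s : lock_proc k * store k) : Prop :=
  List.In ([::], true) s.1.

Definition lock_reach (k : nat) := clos_refl_trans (lock_proc k * store k) (@lock_step k).

Definition lock_may_state (k : nat) (s : lock_proc k * store k) : Prop :=
  exists s', lock_reach s s' /\ lock_successful s'.

Definition lock_must_state (k : nat) (s : lock_proc k * store k) : Prop :=
  forall s', lock_reach s s' -> lock_may_state s'.

Definition lock_may (k : nat) (IS : store k) (P : lock_proc k) := lock_may_state (P, IS).
Definition lock_must (k : nat) (IS : store k) (P : lock_proc k) := lock_must_state (P, IS).

Fixpoint tau_sub (k : nat) (wsend wrecv : seq (lsym k)) (u : sync_sub) : lock_sub k :=
  match u with
  | SCheck => ([::], true)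
  | SZero => ([::], false)
  | SSend u' => let: (w, e) := tau_sub wsend wrecv u' in (wsend ++ w, e)
  | SRecv u' => let: (w, e) := tau_sub wsend wrecv u' in (wrecv ++ w, e)
  end.

Definition tau (k : nat) (wsend wrecv : seq (lsym k)) (P : sync_proc) : lock_proc k :=
  map (tau_sub wsend wrecv) P.

Definition correct_translation (k : nat) (IS : store k) (wsend wrecv : seq (lsym k)) : Prop :=
  forall P : sync_proc,
    (sync_may P <-> lock_may IS (tau wsend wrecv P)) /\
    (sync_must P <-> lock_must IS (tau wsend wrecv P)).

Inductive btype (k : nat) : Type :=
| BP  : 'I_k -> btype k
| BPP : 'I_k -> btype k.

(* run a word as a single subprocess; [seen i] records whether a symbol of
   {P_i, T_i} has already occurred in the executed prefix *)
Fixpoint run_block (k : nat) (C : store k) (seen : 'I_k -> bool) (S : seq (lsym k))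
  : option (btype k) :=
  match S with
  | [::] => None
  | LP i :: S' => if C i then Some (if seen i then BPP i else BP i)
                  else run_block (upd C i true) (upd seen i true) S'
  | LT i :: S' => run_block (upd C i false) (upd seen i true) S'
  end.

Definition blocking_type (k : nat) (IS : store k) (S : seq (lsym k)) : option (btype k) :=
  run_block IS (fun _ => false) S.

(* Translating the must-convergent process !✓ | ?0 yields the components (wsend, ✓)
   and (wrecv, 0); if both words block on P_i for the same lock i, some interleaving
   deadlocks them.  A word blocking on P_i either starts with T_i (and still blocks on
   P_i after it), or blocks from every store in which lock i is full, leaving i full:
   with two locks, the part before its first i-symbol acts on the other lock only and,
   when nonempty, fixes that lock's value, so everything after the first T_i runs as in
   the blocking run.  Executing the leading T_i's of both words together, one of them
   reaches the second form; running the other one until it blocks on P_i fills lock i,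
   and then the first one blocks as well. *)
From mathcomp Require Import all_boot.
From Stdlib Require Import Permutation Relation_Operators Operators_Properties
  FunctionalExtensionality.

Set Implicit Arguments.
Unset Strict Implicit.
Unset Printing Implicit Defensive.

Section SingleWord.

Variable k : nat.
Implicit Types (C : store k) (i j : 'I_k) (x : lsym k) (v w : seq (lsym k)).

Definition lock_of x : 'I_k := match x with LP j | LT j => j end.

Definition touches i : pred (lsym k) := fun x => lock_of x == i.

Definition is_P x : bool := if x is LP _ then true else false.

Fixpoint exec C w : seq (lsym k) * store k :=
  match w with
  | [::] => ([::], C)
  | LP j :: w' => if C j then (w, C) else exec (upd C j true) w'
  | LT j :: w' => exec (upd C j false) w'
  end.

Definition stuck C w := exists j w', w = LP j :: w' /\ C j.

Definition blocks_at i C w := exists w', (exec C w).1 = LP i :: w'.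

Definition blocks_when_full i w :=
  forall C, C i -> stuck (exec C w).2 (exec C w).1 /\ (exec C w).2 i.

Lemma upd_upd C i b b' : upd (upd C i b) i b' = upd C i b'.
Proof. by apply: functional_extensionality => x; rewrite /upd; case: (x == i). Qed.

Lemma exec_cat C v w :
  exec C (v ++ w) =
  if (exec C v).1 is [::] then exec (exec C v).2 w
  else ((exec C v).1 ++ w, (exec C v).2).
Proof. by elim: v C => [|[j|j] v IH] C //=; case: ifP. Qed.

Lemma exec_done_or_stuck C w :
  (exec C w).1 = [::] \/ stuck (exec C w).2 (exec C w).1.
Proof.
elim: w C => [|[j|j] w IH] C /=; [by left | | exact: IH].
by case: ifP => [Cj|_]; [right; exists j, w | exact: IH].
Qed.

Lemma exec_suffix C w : exists p, w = p ++ (exec C w).1.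
Proof.
elim: w C => [|[j|j] w IH] C /=; [by exists [::] | | ].
- case: ifP => _; first by exists [::].
  by have [p {1}->] := IH (upd C j true); exists (LP j :: p).
- by have [p {1}->] := IH (upd C j false); exists (LT j :: p).
Qed.

Lemma exec_untouched C i v : ~~ has (touches i) v -> (exec C v).2 i = C i.
Proof.
elim: v C => [|[j|j] v IH] C //=; rewrite negb_or /touches /= => /andP [ji vi].
  case: ifP => _ //.
all: by rewrite IH // /upd eq_sym (negbTE ji).
Qed.

Lemma exec_last C v x :
  (exec C (rcons v x)).1 = [::] -> (exec C (rcons v x)).2 (lock_of x) = is_P x.
Proof.
rewrite -cats1 exec_cat; case: (exec C v).1 => [|//].
case: x => j /=; last by rewrite /upd eqxx.
by case: ifP => // _ _; rewrite /= /upd eqxx.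
Qed.

Lemma blocks_at_touches i C w : blocks_at i C w -> has (touches i) w.
Proof.
move=> [w' blocked]; have [p ->] := exec_suffix C w.
by rewrite blocked has_cat /= /touches eqxx orbT.
Qed.

Lemma blocks_at_full i C w : blocks_at i C w -> (exec C w).2 i.
Proof.
move=> [w' blocked]; case: (exec_done_or_stuck C w) => [|[j [w'' [rest full]]]].
  by rewrite blocked.
by move: rest full; rewrite blocked => -[<- _].
Qed.

Lemma blocks_at_untouched_prefix i C v w :
  ~~ has (touches i) v -> blocks_at i C (v ++ w) -> (exec C v).1 = [::].
Proof.
move=> vi [w' blocked]; move: blocked; rewrite exec_cat.
case E: (exec C v).1 => [//|x r] [xi _].
have [p Ev] := exec_suffix C v; move: vi; rewrite Ev E has_cat /= xi.
by rewrite /touches eqxx orbT.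
Qed.

Definition blocked_lock (b : btype k) : 'I_k := match b with BP j | BPP j => j end.

Lemma run_block_blocks_at C seen w b :
  run_block C seen w = Some b -> blocks_at (blocked_lock b) C w.
Proof.
elim: w C seen => [|[j|j] w IH] C seen //=; rewrite /blocks_at /=; last exact: IH.
case: ifP => _; last exact: IH.
by case: (seen j) => -[<-]; exists w.
Qed.

Lemma blocks_when_full_P i v w :
  ~~ has (touches i) v -> blocks_when_full i (v ++ LP i :: w).
Proof.
move=> vi C Ci; rewrite exec_cat.
case: (exec_done_or_stuck C v) => [-> /= | [j [w' [-> fullj]]]].
  have fulli : (exec C v).2 i by rewrite exec_untouched.
  by rewrite fulli; split => //; exists i, w.
by split; [exists j, (w' ++ LP i :: w) | rewrite /= exec_untouched].
Qed.

End SingleWord.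

Section Deadlock.

Variable k : nat.
Implicit Types (C : store k) (i : 'I_k) (s : lock_proc k * store k).

Definition deadlocked s := forall w e, List.In (w, e) s.1 -> stuck s.2 w.

Lemma deadlocked_no_step s t : deadlocked s -> ~ lock_step s t.
Proof.
case: s => P C dead [a [w [e [R [perm move_a]]]]].
have /dead [j [w' [[Ea _] Cj]]] : List.In (a :: w, e) P.
  by apply: Permutation_in (Permutation_sym perm) _; left.
by move: move_a Cj; rewrite Ea /= => -[->].
Qed.

Lemma deadlocked_not_may s : deadlocked s -> ~ lock_may_state s.
Proof.
move=> dead [t [reach succ]].
have st : s = t.
  case: (clos_rt_rt1n _ _ _ _ reach) => // y z step _.
  by case: (deadlocked_no_step dead step).
by move: succ; rewrite -st => /dead [j [w' []]].
Qed.

Lemma exec_reach C w e R P :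
  Permutation P ((w, e) :: R) ->
  exists2 P', lock_reach (P, C) (P', (exec C w).2) &
              Permutation P' (((exec C w).1, e) :: R).
Proof.
elim: w P C => [|[j|j] w IH] P C perm /=; first by exists P => //; apply: rt_refl.
- case: ifP => Cj; first by exists P => //; apply: rt_refl.
  have [P' reach perm'] := IH _ (upd C j true) (Permutation_refl _).
  exists P' => //; apply: rt_trans reach; apply: rt_step.
  by exists (LP j), w, e, R.
- have [P' reach perm'] := IH _ (upd C j false) (Permutation_refl _).
  exists P' => //; apply: rt_trans reach; apply: rt_step.
  by exists (LT j), w, e, R.
Qed.

Lemma blocking_pair_deadlock i C a b ea eb P :
  blocks_at i C a -> blocks_when_full i b -> Permutation P [:: (a, ea); (b, eb)] ->
  exists2 t, lock_reach (P, C) t & deadlocked t.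
Proof.
move=> blocked_a full_b perm; have full_i := blocks_at_full blocked_a.
have [a' rest_a] := blocked_a.
have [P1 reach1] := exec_reach C perm; rewrite rest_a => perm1.
have [P2 reach2 perm2] :=
  exec_reach (exec C a).2 (Permutation_trans perm1 (perm_swap _ _ _)).
have [stuck_b full_i'] := full_b _ full_i.
exists (P2, (exec (exec C a).2 b).2); first exact: rt_trans reach1 reach2.
move=> w e /= /(Permutation_in _ perm2) [[<- _] | [[<- _] | []]] //.
by exists i, a'.
Qed.

End Deadlock.

Section TwoLocks.

Implicit Types (C : store 2) (i : 'I_2) (v w : seq (lsym 2)).

Lemma ord2_other (i j j' : 'I_2) : j != i -> j' != i -> j = j'.
Proof.
by case: i j j' => [[|[|?]] ?] [[|[|?]] ?] [[|[|?]] ?] //= _ _; apply: val_inj.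
Qed.

Lemma exec_done_eq_off C C' i v :
  ~~ nilp v -> ~~ has (touches i) v ->
  (exec C v).1 = [::] -> (exec C' v).1 = [::] ->
  upd (exec C v).2 i false = upd (exec C' v).2 i false.
Proof.
case/lastP: v => [//|v x] _; rewrite has_rcons negb_or => /andP [xi _] done done'.
apply: functional_extensionality => y; rewrite /upd; case: ifP => // /negbT yi.
by rewrite -(ord2_other xi yi) !exec_last.
Qed.

Lemma blocks_when_full_T C i v w :
  ~~ nilp v -> ~~ has (touches i) v -> blocks_at i C (v ++ LT i :: w) ->
  blocks_when_full i (v ++ LT i :: w).
Proof.
move=> v0 vi blocked C' C'i.
have doneC := blocks_at_untouched_prefix vi blocked.
move: blocked; rewrite /blocks_at !exec_cat doneC /= => blocked.
case: (exec_done_or_stuck C' v) => [doneC' | [j [w' [-> fullj]]]] /=.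
- rewrite doneC' /= (exec_done_eq_off v0 vi doneC' doneC).
  have full_i := blocks_at_full blocked; have [w' rest] := blocked.
  by split=> //; exists i, w'.
- by split; [exists j, (w' ++ LT i :: w) | rewrite exec_untouched].
Qed.

Lemma blocks_at_cases C i w :
  blocks_at i C w ->
  blocks_when_full i w \/
  exists w', w = LT i :: w' /\ blocks_at i (upd C i false) w'.
Proof.
move=> blocked; have touch := blocks_at_touches blocked.
move: blocked; case/split_find: touch.
move=> x v w' /eqP <- vi; rewrite cat_rcons; case: x vi => j /= vi blocked.
  by left; exact: blocks_when_full_P.
case: v vi blocked => [|y v] vi blocked; first by right; exists w'.
by left; apply: blocks_when_full_T blocked.
Qed.

Lemma blocks_at_deadlock C i s r es er P :
  blocks_at i C s -> blocks_at i C r -> Permutation P [:: (s, es); (r, er)] ->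
  exists2 t, lock_reach (P, C) t & deadlocked t.
Proof.
elim: s r C P => [|x s IH] r C P blocked_s blocked_r perm; first by case: blocked_s.
case: (blocks_at_cases blocked_s) => [full_s | [s' [[Ex Es] blocked_s']]].
  apply: blocking_pair_deadlock blocked_r full_s _.
  exact: Permutation_trans perm (perm_swap _ _ _).
case: (blocks_at_cases blocked_r) => [full_r | [r' [Er blocked_r']]].
  exact: blocking_pair_deadlock blocked_s full_r perm.
subst x s' r; set C' := upd C i false.
have step_s : lock_step (P, C) ([:: (s, es); (LT i :: r', er)], C').
  by exists (LT i), s, es, [:: (LT i :: r', er)].
have step_r :
    lock_step ([:: (s, es); (LT i :: r', er)], C') ([:: (r', er); (s, es)], C').
  exists (LT i), r', er, [:: (s, es)]; split; first exact: perm_swap.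
  by rewrite /C' upd_upd.
have reach := rt_trans _ _ _ _ _ (rt_step _ _ _ _ step_s) (rt_step _ _ _ _ step_r).
have [t reach' dead] := IH r' _ _ blocked_s' blocked_r' (perm_swap _ _ _).
by exists t => //; apply: rt_trans reach reach'.
Qed.

End TwoLocks.

Lemma sync_step_successful P Q :
  sync_successful P -> sync_step P Q -> sync_successful Q.
Proof.
move=> succ [u1 [u2 [R [perm ->]]]].
by case: (Permutation_in _ perm succ) => [//|[//|inR]]; right; right.
Qed.

Lemma sync_reach_successful P Q :
  sync_reach P Q -> sync_successful P -> sync_successful Q.
Proof.
elim=> [x y step|//|x y z _ IHxy _ IHyz] succ; last exact/IHyz/IHxy.
exact: sync_step_successful step.
Qed.

Lemma sync_step_send_check u Q :
  sync_step [:: SSend SCheck; SRecv u] Q -> sync_successful Q.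
Proof.
move=> [u1 [u2 [R [perm ->]]]].
have := Permutation_in _ (Permutation_sym perm) (or_introl erefl).
by case=> [[<-]|[//|[]]]; left.
Qed.

Lemma sync_must_send_check u : sync_must [:: SSend SCheck; SRecv u].
Proof.
move=> Q reach; case: (clos_rt_rt1n _ _ _ _ reach) => [|y Q' step rest].
  exists [:: SCheck; u]; split; last by left.
  by apply: rt_step; exists SCheck, u, [::].
exists Q'; split; first exact: rt_refl.
exact: sync_reach_successful (clos_rt1n_rt _ _ _ _ rest) (sync_step_send_check step).
Qed.

Theorem proposition5p1 (IS : store 2) (wsend wrecv : seq (lsym 2)) (i j : 'I_2) :
  correct_translation IS wsend wrecv ->
  blocking_type IS wsend = Some (BPP i) ->
  blocking_type IS wrecv = Some (BPP j) ->
  i <> j.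
Proof.
move=> correct type_send type_recv eq_ij; subst j.
have must := proj1 (proj2 (correct _)) (@sync_must_send_check SZero).
rewrite /lock_must /tau /= !cats0 in must.
have [t reach dead] := blocks_at_deadlock (run_block_blocks_at type_send)
  (run_block_blocks_at type_recv) (Permutation_refl [:: (wsend, true); (wrecv, false)]).
exact: deadlocked_not_may dead (must t reach).
Qed.
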